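(* Let $0<\alpha<\frac12$, let $k\ge1$ be an integer, and let $z_1,\ldots,z_k$ be independent random variables each uniformly distributed on $[\alpha-\frac12,\frac12-\alpha]$, with mean $\bar z=\frac1k\sum_{i=1}^k z_i$. Then for any $\beta>0$, \[\mathbb{E}\Bigl(\exp\Bigl(-\beta\sum_{i=1}^k (z_i-\bar z)^2\Bigr)\Bigr)\le k^{1/2}\Bigl(\frac{\pi}{(1-2\alpha)^2\beta}\Bigr)^{(k-1)/2}.\] *)

From HB Require Import structures.
From mathcomp Require Import all_boot all_order all_algebra.
From mathcomp Require Import all_classical all_reals all_analysis.
Set Implicit Arguments. Unset Strict Implicit. Unset Printing Implicit Defensive.
Import Order.TTheory GRing.Theory Num.Theory.
Local Open Scope classical_set_scope.
Local Open Scope ring_scope.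

(* Mutual independence of a finite family (z i)_{i < k} of real random
   variables: for every family of Borel sets B_i,
   P (/\_i {z_i in B_i}) = prod_i P {z_i in B_i}.
   (Taking B_j = setT for omitted indices, this is the product rule over
   every subfamily.) *)
Definition mutually_independent d (T : measurableType d) (R : realType)
    (P : probability T R) (k : nat) (z : 'I_k -> {RV P >-> R}) : Prop :=
  forall B : 'I_k -> set R, (forall i, measurable (B i)) ->
    P (\bigcap_(i in [set: 'I_k]) (z i @^-1` B i)) =
    (\prod_(i < k) P (z i @^-1` B i))%E.

Definition uniformly_distributed d (T : measurableType d) (R : realType)
    (P : probability T R) (a b : R) (X : {RV P >-> R}) : Prop :=
  forall A : set R, measurable A ->
    distribution P X A =
    (\int[@lebesgue_measure R]_(x in A) (uniform_pdf a b x)%:E)%E.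

Definition zmean d (T : measurableType d) (R : realType)
    (P : probability T R) (k : nat) (z : 'I_k -> {RV P >-> R}) (w : T) : R :=
  k%:R^-1 * \sum_(i < k) z i w.

(* Write S := sum_i (z_i - zbar)^2.  For every real c,
   sum_i (z_i - c)^2 = S + k (c - zbar)^2, so integrating
   prod_i exp(-beta (z_i - c)^2) over c yields exp(-beta S) sqrt(pi/(beta k)).
   After taking expectations, Tonelli lets us integrate over c last, and
   independence splits the inner expectation into prod_i E exp(-beta (z_i - c)^2).
   Each factor is at most sqrt(pi/beta)/(1 - 2 alpha): a Gaussian integral divided
   by the length of the interval.  Bounding all factors but one in this way and
   integrating the remaining one over c (which gives sqrt(pi/beta)) yields
   E exp(-beta S) sqrt(pi/(beta k))
     <= (sqrt(pi/beta)/(1 - 2 alpha))^(k-1) sqrt(pi/beta). *)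

From HB Require Import structures.
From mathcomp Require Import all_boot all_order all_algebra.
From mathcomp Require Import all_classical all_reals all_analysis.
From mathcomp Require Import measurable_realfun ring lra.
Import Order.TTheory GRing.Theory Num.Theory.
Local Open Scope classical_set_scope.
Local Open Scope ring_scope.
Import HBNNSimple.
Set Implicit Arguments.
Unset Strict Implicit.
Unset Printing Implicit Defensive.

Lemma prod_indic_bigcap {I : finType} {U : Type} {R : comPzRingType} (F : I -> set U) x :
  \prod_(i : I) \1_(F i) x = \1_(\bigcap_(i in [set: I]) F i) x :> R.
Proof.
have [Fx|] := pselect (forall i, F i x).
  by rewrite indicE mem_set ?big1 // => i; rewrite indicE mem_set.
move=> /existsNP [i Fix]; rewrite (bigD1 i) //= indicE memNset // mul0r.
by rewrite indicE memNset // => /(_ i Logic.I).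
Qed.

Section independence.
Context d (T : measurableType d) (R : realType) (P : probability T R).
Local Open Scope ereal_scope.

Lemma integral_indic_comp (X : {mfun T >-> R}) (A : set R) : measurable A ->
  \int[P]_w (\1_A (X w))%:E = P (X @^-1` A).
Proof.
move=> mA; have mXA : measurable (X @^-1` A) by exact: measurable_funPTI.
by rewrite -[X @^-1` A]setIT -integral_indic.
Qed.

Lemma integral01_fin_num (f : T -> R) : measurable_fun setT f ->
  (forall w, 0 <= f w <= 1)%R -> \int[P]_w (f w)%:E \is a fin_num.
Proof.
move=> mf f01; have f0 w : 0 <= (f w)%:E by rewrite lee_fin; case/andP: (f01 w).
rewrite ge0_fin_numE; last exact: integral_ge0.
apply: (@le_lt_trans _ _ (\int[P]_w (cst 1 w))).
  apply: ge0_le_integral => //; first exact/measurable_EFinP.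
  by move=> w _; rewrite lee_fin; case/andP: (f01 w).
by rewrite integral_cst //= mul1e probability_setT ltry.
Qed.

Lemma integral_mul_nnsfun_comp (G : T -> R) (X : {mfun T >-> R})
    (h : {nnsfun R >-> R}) :
  measurable_fun setT G -> (forall w, 0 <= G w)%R ->
  \int[P]_w ((G w)%:E * (h (X w))%:E) =
  \sum_(r \in range h) r%:E * \int[P]_w ((G w)%:E * (\1_(h @^-1` [set r]) (X w))%:E).
Proof.
move=> mG G0.
have mGindic r : measurable_fun setT (fun w => (G w * \1_(h @^-1` [set r]) (X w))%R).
  by apply: measurable_funM => //; apply: measurableT_comp.
transitivity (\int[P]_w \sum_(r \in range h)
    r%:E * ((G w)%:E * (\1_(h @^-1` [set r]) (X w))%:E)).
  apply: eq_integral => w _; rewrite (fimfunE h (X w)) -fsumEFin //.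
  rewrite ge0_mule_fsumr => [|r]; last by rewrite EFinM nnfun_muleindic_ge0.
  by apply: eq_fsbigr => r _; rewrite -!EFinM mulrCA.
rewrite ge0_integral_fsum //; last 2 first.
- move=> r; apply: measurable_funeM.
  by under eq_fun do rewrite -EFinM; exact/measurable_EFinP.
- move=> r w _; rewrite -EFinM lee_fin mulrCA mulr_ge0 //.
  by rewrite -lee_fin EFinM nnfun_muleindic_ge0.
apply: eq_fsbigr => r /set_mem [x _ <-].
rewrite ge0_integralZl //.
- by under eq_fun do rewrite -EFinM; exact/measurable_EFinP.
- by move=> w _; rewrite -EFinM lee_fin mulr_ge0 // indicE.
- by rewrite lee_fin.
Qed.

Lemma integral_mul_nnsfun_comp_from_indic (G : T -> R) (X : {mfun T >-> R}) (c : R)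
    (h : {nnsfun R >-> R}) :
  measurable_fun setT G -> (forall w, 0 <= G w)%R ->
  (forall A, measurable A ->
     \int[P]_w ((G w)%:E * (\1_A (X w))%:E) = c%:E * P (X @^-1` A)) ->
  \int[P]_w ((G w)%:E * (h (X w))%:E) = c%:E * \int[P]_w (h (X w))%:E.
Proof.
move=> mG G0 GX.
have -> : \int[P]_w (h (X w))%:E = \int[P]_w ((cst 1%R w)%:E * (h (X w))%:E).
  by apply: eq_integral => w _; rewrite mul1e.
rewrite !integral_mul_nnsfun_comp // ge0_mule_fsumr => [|r]; last first.
  under eq_integral do rewrite mul1e.
  rewrite integral_indic_comp; last exact: measurable_funPTI.
  apply: (mulemu_ge0 (fun r => X @^-1` (h @^-1` [set r]))) => r0.
  by rewrite preimage_nnfun0 ?preimage_set0.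
apply: eq_fsbigr => r /set_mem [x _ <-].
have mhx : measurable (h @^-1` [set h x]) by exact: measurable_funPTI.
under [in RHS]eq_integral do rewrite mul1e.
by rewrite GX // integral_indic_comp // muleCA.
Qed.

Lemma integral_mul_comp_nnsfun_approx (G : T -> R) (X : {mfun T >-> R})
    (f : R -> \bar R) (mf : measurable_fun setT f) :
  measurable_fun setT G -> (forall w, 0 <= G w)%R -> (forall x, 0 <= f x) ->
  \int[P]_w ((G w)%:E * f (X w)) =
  limn (fun n => \int[P]_w ((G w)%:E * (nnsfun_approx measurableT mf n (X w))%:E)).
Proof.
move=> mG G0 f0; rewrite -monotone_convergence //=.
- apply: eq_integral => w _; apply/esym/cvg_lim => //; apply: cvgeZl => //.
  by apply: cvg_nnsfun_approx => // x _; exact: f0.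
- move=> n; under eq_fun do rewrite -EFinM.
  by apply/measurable_EFinP; apply: measurable_funM => //; exact: measurableT_comp.
- by move=> n w _; rewrite -EFinM lee_fin mulr_ge0.
- move=> w _ m n mn; rewrite lee_fin ler_wpM2l //.
  exact/lefP/nd_nnsfun_approx.
Qed.

Lemma integral_mul_comp_from_indic (G : T -> R) (X : {mfun T >-> R}) (c : R)
    (f : R -> \bar R) :
  measurable_fun setT G -> (forall w, 0 <= G w)%R -> (0 <= c)%R ->
  (forall A, measurable A ->
     \int[P]_w ((G w)%:E * (\1_A (X w))%:E) = c%:E * P (X @^-1` A)) ->
  measurable_fun setT f -> (forall x, 0 <= f x) ->
  \int[P]_w ((G w)%:E * f (X w)) = c%:E * \int[P]_w f (X w).
Proof.
move=> mG G0 c0 GX mf f0.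
have -> : \int[P]_w f (X w) = \int[P]_w ((cst 1%R w)%:E * f (X w)).
  by apply: eq_integral => w _; rewrite mul1e.
rewrite !(integral_mul_comp_nnsfun_approx _ mf) //.
rewrite -limeMl //.
  apply: congr_lim; apply/funext => n /=.
  rewrite (integral_mul_nnsfun_comp_from_indic _ mG G0 GX); congr (_ * _).
  by apply: eq_integral => w _; rewrite mul1e.
apply/ereal_nondecreasing_is_cvgn => m n mn; apply: ge0_le_integral => //.
- by move=> w _; rewrite mul1e lee_fin.
- by under eq_fun do rewrite mul1e; apply/measurable_EFinP; exact: measurableT_comp.
- by under eq_fun do rewrite mul1e; apply/measurable_EFinP; exact: measurableT_comp.
- by move=> w _; rewrite !mul1e lee_fin; exact/lefP/nd_nnsfun_approx.
Qed.

Lemma integral_prod_update_indic k (z : 'I_k -> {RV P >-> R}) (h : 'I_k -> R -> R)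
    (j : 'I_k) :
  (forall i, measurable_fun setT (h i)) -> (forall i x, 0 <= h i x <= 1)%R ->
  (forall A, measurable A ->
    \int[P]_w (\prod_(i < k) (if i == j then \1_A else h i) (z i w))%:E =
    \prod_(i < k) \int[P]_w ((if i == j then \1_A else h i) (z i w))%:E) ->
  \int[P]_w (\prod_(i < k) h i (z i w))%:E = \prod_(i < k) \int[P]_w (h i (z i w))%:E.
Proof.
move=> mh h01 hA.
have mhz i : measurable_fun setT (fun w => h i (z i w)) by exact: measurableT_comp.
have hz0 i w : (0 <= h i (z i w))%R by case/andP: (h01 i (z i w)).
pose G w := (\prod_(i < k | i != j) h i (z i w))%R.
pose c := (\prod_(i < k | i != j) fine (\int[P]_w (h i (z i w))%:E))%R.
have cE : c%:E = \prod_(i < k | i != j) \int[P]_w (h i (z i w))%:E.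
  rewrite -prodEFin; apply: eq_bigr => i _; rewrite fineK //.
  exact: integral01_fin_num.
have GzA A : measurable A ->
    \int[P]_w ((G w)%:E * (\1_A (z j w))%:E) = c%:E * P (z j @^-1` A).
  move=> mA.
  transitivity (\int[P]_w (\prod_(i < k) (if i == j then \1_A else h i) (z i w))%:E).
    apply: eq_integral => w _; rewrite (bigD1 j) //= eqxx mulrC.
    by congr (_ * _)%:E; apply: eq_bigr => i /negbTE ->.
  rewrite hA // (bigD1 j) //= eqxx integral_indic_comp // cE muleC.
  by congr (_ * _); apply: eq_bigr => i /negbTE ->.
have mG : measurable_fun setT G.
  rewrite /G; under eq_fun do rewrite big_mkcond /=.
  by apply: measurable_prod => i _; case: (i != j).
have G0 w : (0 <= G w)%R by apply: prodr_ge0 => i _.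
have c0 : (0 <= c)%R.
  apply: prodr_ge0 => i _; apply: fine_ge0.
  by apply: integral_ge0 => w _; rewrite lee_fin.
transitivity (\int[P]_w ((G w)%:E * (h j (z j w))%:E)).
  by apply: eq_integral => w _; rewrite (bigD1 j) //= mulrC EFinM.
rewrite (integral_mul_comp_from_indic (f := fun x => (h j x)%:E) mG G0 c0 GzA) //;
  last 2 first.
- exact/measurable_EFinP.
- by move=> x; rewrite lee_fin; case/andP: (h01 j x).
by rewrite [RHS](bigD1 j) //= cE muleC.
Qed.

(* Independence only covers indicators; induction on n replaces them by
   arbitrary functions, one factor at a time. *)
Lemma integral_prod_indep_partial k (z : 'I_k -> {RV P >-> R}) :
  mutually_independent z -> forall n (h : 'I_k -> R -> R) (B : 'I_k -> set R),
  (forall i, measurable_fun setT (h i)) -> (forall i x, 0 <= h i x <= 1)%R ->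
  (forall i, measurable (B i)) -> (forall i : 'I_k, (n <= i)%N -> h i = \1_(B i)) ->
  \int[P]_w (\prod_(i < k) h i (z i w))%:E = \prod_(i < k) \int[P]_w (h i (z i w))%:E.
Proof.
move=> zi; elim=> [|n IH] h B mh h01 mB hB.
  have {hB}-> : h = (fun i => \1_(B i)) by apply/funext => i; exact: hB.
  have mzB i : measurable (z i @^-1` B i) by exact: measurable_funPTI.
  under eq_integral do rewrite (prod_indic_bigcap (fun i => z i @^-1` B i)).
  rewrite integral_indic //; last exact: fin_bigcap_measurable.
  rewrite setIT.
  by apply: eq_trans (zi B mB) _; apply: eq_bigr => i _; rewrite integral_indic_comp.
have [kn|nk] := leqP k n.
  apply: IH mh h01 mB _ => i ni.
  by have := leq_trans (ltn_ord i) (leq_trans kn ni); rewrite ltnn.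
pose j := Ordinal nk; apply: (integral_prod_update_indic (j := j)) => // A mA.
apply: (IH (fun i => if i == j then \1_A else h i) (fun i => if i == j then A else B i))
  => [i|i x|i|i ni].
- by case: eqP => // _; exact: measurable_indic.
- by case: eqP => // _; rewrite indicE; case: (_ \in _); rewrite ?ler01 ?lexx.
- by case: eqP.
- case: eqP => // /eqP ij; apply: hB.
  by rewrite ltn_neqAle ni andbT; apply: contra ij => /eqP nE; apply/eqP/val_inj.
Qed.

Lemma integral_prod_indep k (z : 'I_k -> {RV P >-> R}) (g : 'I_k -> R -> R) :
  mutually_independent z -> (forall i, measurable_fun setT (g i)) ->
  (forall i x, 0 <= g i x <= 1)%R ->
  \int[P]_w (\prod_(i < k) g i (z i w))%:E = \prod_(i < k) \int[P]_w (g i (z i w))%:E.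
Proof.
move=> zi mg g01.
apply: (integral_prod_indep_partial zi (n := k) (B := fun=> setT)) => //.
by move=> i; rewrite leqNgt ltn_ord.
Qed.

End independence.

Lemma sum_sqr_subr_mean (F : fieldType) k (x : 'I_k -> F) (c : F) : k%:R != 0 :> F ->
  \sum_(i < k) (x i - c) ^+ 2 =
  \sum_(i < k) (x i - k%:R^-1 * \sum_(j < k) x j) ^+ 2
  + k%:R * (c - k%:R^-1 * \sum_(j < k) x j) ^+ 2.
Proof.
move=> k0; set m := k%:R^-1 * \sum_(j < k) x j.
have centered : \sum_(i < k) (x i - m) = 0.
  by rewrite sumrB sumr_const card_ord /m; field.
transitivity (\sum_(i < k) ((x i - m) ^+ 2 + (c - m) ^+ 2 - 2 * (c - m) * (x i - m))).
  by apply: eq_bigr => i _; ring.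
rewrite sumrB big_split /= sumr_const card_ord -mulr_sumr centered mulr0 subr0.
by rewrite mulr_natl.
Qed.

Lemma prode_le_pow_mul (R : realDomainType) k (x : 'I_k -> \bar R) (M : R) (i0 : 'I_k) :
  (forall i, 0 <= x i)%E -> (forall i, i != i0 -> x i <= M%:E)%E ->
  (\prod_(i < k) x i <= (M ^+ k.-1)%:E * x i0)%E.
Proof.
move=> x0 xM; rewrite (bigD1 i0) //= muleC.
have -> : M ^+ k.-1 = \prod_(i < k | i != i0) M.
  by rewrite prodr_const cardC1 card_ord.
rewrite -prodEFin; apply: lee_wpmul2r => //.
have /andP[_ //] : (0 <= \prod_(i < k | i != i0) x i <= \prod_(i < k | i != i0) M%:E)%E.
apply: (big_ind2 (fun a b => 0 <= a <= b)%E) => [|a b u v /andP[a0 ab] /andP[u0 uv]|i ij].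
- by rewrite lee01 lexx.
- by rewrite mule_ge0 // lee_pmul.
- by rewrite x0 xM.
Qed.

(* Up to its peak factor, [expR (- gamma * (x - m) ^+ 2)] is the normal density
   of mean [m] and variance [(2 gamma)^-1]. *)
Lemma integralT_gauss_shift (R : realType) (gamma m : R) : 0 < gamma ->
  (\int[lebesgue_measure]_x (expR (- gamma * (x - m) ^+ 2))%:E =
   (Num.sqrt (pi / gamma))%:E)%E.
Proof.
move=> gamma0; pose s := Num.sqrt (gamma *+ 2)^-1.
have s2 : s ^+ 2 = (gamma *+ 2)^-1 by rewrite sqr_sqrtr // invr_ge0 mulrn_wge0 // ltW.
have s0 : s != 0 by rewrite sqrtr_eq0 -ltNge invr_gt0 mulrn_wgt0.
have peak0 : 0 < normal_peak s by exact: normal_peak_gt0.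
have peakE : normal_peak s = (Num.sqrt (pi / gamma))^-1.
  by rewrite /normal_peak s2; congr (Num.sqrt _)^-1; field; exact: lt0r_neq0.
transitivity (\int[lebesgue_measure]_x ((normal_peak s)^-1%:E * (normal_pdf m s x)%:E))%E.
  apply: eq_integral => x _; rewrite normal_pdfE // -EFinM mulKf ?gt_eqF //.
  by rewrite /normal_fun s2; congr (expR _)%:E; field; exact: lt0r_neq0.
rewrite ge0_integralZl //.
- by rewrite integral_normal_pdf mule1 peakE invrK.
- by apply/measurable_EFinP; apply: measurable_normal_pdf.
- by move=> x _; rewrite lee_fin normal_pdf_ge0.
- by rewrite lee_fin invr_ge0 ltW.
Qed.

Definition gauss_bump (R : realType) (beta c x : R) := expR (- beta * (x - c) ^+ 2).

Lemma measurable_gauss_bump (R : realType) d (U : measurableType d) (beta : R)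
    (f g : U -> R) :
  measurable_fun setT f -> measurable_fun setT g ->
  measurable_fun setT (fun u => gauss_bump beta (f u) (g u)).
Proof.
move=> mf mg; apply: measurableT_comp => //; apply: measurable_funM => //.
exact/measurable_funX/measurable_funB.
Qed.

Section gauss_bump.
Context (R : realType) (beta : R).
Hypothesis beta_gt0 : 0 < beta.

Lemma gauss_bump_ge0_le1 c x : 0 <= gauss_bump beta c x <= 1.
Proof.
rewrite /gauss_bump expR_ge0 /= -expR0 ler_expR mulNr oppr_le0.
by rewrite mulr_ge0 ?sqr_ge0 // ltW.
Qed.

Lemma integralT_gauss_bump_center x :
  (\int[lebesgue_measure]_c (gauss_bump beta c x)%:E = (Num.sqrt (pi / beta))%:E)%E.
Proof.
rewrite -(integralT_gauss_shift x beta_gt0); apply: eq_integral => c _.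
by rewrite /gauss_bump -sqrrN opprB.
Qed.

Lemma integralT_prod_gauss_bump k (x : 'I_k -> R) : (0 < k)%N ->
  (\int[lebesgue_measure]_c (\prod_(i < k) gauss_bump beta c (x i))%:E =
   (expR (- beta * \sum_(i < k) (x i - k%:R^-1 * \sum_(j < k) x j) ^+ 2)
    * Num.sqrt (pi / (beta * k%:R)))%:E)%E.
Proof.
move=> k0; have betak0 : 0 < beta * k%:R by rewrite mulr_gt0 // ltr0n.
rewrite EFinM -(integralT_gauss_shift (k%:R^-1 * \sum_(j < k) x j) betak0).
rewrite -ge0_integralZl //; last first.
  apply/measurable_EFinP.
  exact: (measurable_gauss_bump (beta * k%:R) (f := cst _) (g := id)).
apply: eq_integral => c _; rewrite -EFinM -expR_sum -expRD -mulr_sumr.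
by rewrite (sum_sqr_subr_mean x c) ?pnatr_eq0 -?lt0n //; congr (expR _)%:E; ring.
Qed.

End gauss_bump.

Section uniform_gauss_bump.
Context d (T : measurableType d) (R : realType) (P : probability T R) (beta : R).
Hypothesis beta_gt0 : 0 < beta.
Local Open Scope ereal_scope.

Lemma integral_uniform_comp (a b : R) (ab : (a < b)%R) (X : {RV P >-> R})
    (f : R -> \bar R) :
  uniformly_distributed a b X -> measurable_fun setT f -> (forall x, 0 <= f x) ->
  \int[P]_w f (X w) = ((b - a)^-1)%:E * \int[lebesgue_measure]_(x in `[a, b]) f x.
Proof.
move=> Xab mf f0.
have mX : measurable_fun setT (X : T -> measurableTypeR R).
  by move=> mD A mA; exact: (measurable_funP X) mD A mA.
rewrite -(integral_uniform ab) //.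
transitivity (\int[pushforward P (X : T -> measurableTypeR R)]_x f x).
  by rewrite ge0_integral_pushforward.
by rewrite [LHS](eq_measure_integral (uniform_prob ab)) // => A mA _; exact: Xab.
Qed.

Lemma integral_uniform_gauss_bump_le (a b : R) (ab : (a < b)%R) (X : {RV P >-> R}) c :
  uniformly_distributed a b X ->
  \int[P]_w (gauss_bump beta c (X w))%:E <= ((b - a)^-1 * Num.sqrt (pi / beta))%:E.
Proof.
move=> Xab; have g0 x : 0 <= (gauss_bump beta c x)%:E by rewrite lee_fin expR_ge0.
have mg : measurable_fun setT (fun x => (gauss_bump beta c x)%:E).
  by apply/measurable_EFinP; exact: (measurable_gauss_bump beta (f := cst c) (g := id)).
rewrite (integral_uniform_comp ab (f := fun x => (gauss_bump beta c x)%:E)) //.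
rewrite EFinM; apply: lee_wpmul2l; first by rewrite lee_fin invr_ge0 subr_ge0 ltW.
by rewrite -(integralT_gauss_shift c beta_gt0); apply: ge0_subset_integral.
Qed.

Lemma fubini_tonelli_lebesgue (F : T -> measurableTypeR R -> \bar R) :
  measurable_fun setT (fun p : T * measurableTypeR R => F p.1 p.2) ->
  (forall w c, 0 <= F w c) ->
  \int[P]_w \int[lebesgue_measure]_c F w c = \int[lebesgue_measure]_c \int[P]_w F w c.
Proof.
move=> mF F0.
exact: (@fubini_tonelli _ _ _ _ _ P lebesgue_measure (fun p => F p.1 p.2) mF
  (fun p => F0 p.1 p.2)).
Qed.

Lemma measurable_gauss_bump_comp (X : {mfun T >-> R}) :
  measurable_fun setT (fun p : T * measurableTypeR R => gauss_bump beta p.2 (X p.1)).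
Proof.
apply: measurable_gauss_bump; first by move=> mD A mA; exact: measurable_snd.
by apply: measurableT_comp => //; exact: measurable_funP.
Qed.

Lemma measurable_integral_gauss_bump (X : {mfun T >-> R}) :
  measurable_fun setT (fun c => \int[P]_w (gauss_bump beta c (X w))%:E).
Proof.
have mgX : measurable_fun setT
    (fun p : T * measurableTypeR R => (gauss_bump beta p.2 (X p.1))%:E).
  by apply/measurable_EFinP; exact: measurable_gauss_bump_comp.
by apply: (measurable_fun_fubini_tonelli_G _ mgX) => p; rewrite lee_fin expR_ge0.
Qed.

Lemma integral_integral_gauss_bump (X : {mfun T >-> R}) :
  \int[lebesgue_measure]_c \int[P]_w (gauss_bump beta c (X w))%:E =
  (Num.sqrt (pi / beta))%:E.
Proof.
rewrite -fubini_tonelli_lebesgue; last 2 first.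
- by apply/measurable_EFinP; exact: measurable_gauss_bump_comp.
- by move=> w c; rewrite lee_fin expR_ge0.
under eq_integral do rewrite integralT_gauss_bump_center //.
by rewrite integral_cst //= probability_setT mule1.
Qed.

Lemma measurable_sum_sqr_sub_zmean k (z : 'I_k -> {RV P >-> R}) :
  measurable_fun setT (fun w => \sum_(i < k) (z i w - zmean z w) ^+ 2)%R.
Proof.
apply: measurable_sum => i; apply: measurable_funX; apply: measurable_funB => //.
by apply: measurable_funM => //; apply: measurable_sum.
Qed.

Lemma integral_integral_prod_gauss_bump_le k (z : 'I_k -> {RV P >-> R}) (a b : R) :
  (a < b)%R -> (0 < k)%N -> mutually_independent z ->
  (forall i, uniformly_distributed a b (z i)) ->
  \int[lebesgue_measure]_c \int[P]_w (\prod_(i < k) gauss_bump beta c (z i w))%:E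
  <= ((((b - a)^-1 * Num.sqrt (pi / beta)) ^+ k.-1) * Num.sqrt (pi / beta))%:E.
Proof.
move=> ab k0 zi zab; set M := ((b - a)^-1 * Num.sqrt (pi / beta))%R.
pose i0 := Ordinal k0.
have mprod : measurable_fun setT
    (fun p : T * measurableTypeR R => (\prod_(i < k) gauss_bump beta p.2 (z i p.1))%:E).
  apply/measurable_EFinP; apply: measurable_prod => i _.
  exact: measurable_gauss_bump_comp.
apply: (@le_trans _ _ (\int[lebesgue_measure]_c
    ((M ^+ k.-1)%:E * \int[P]_w (gauss_bump beta c (z i0 w))%:E))).
  apply: ge0_le_integral => //.
  - move=> c _; apply: integral_ge0 => w _.
    by rewrite lee_fin; apply: prodr_ge0 => i _; exact: expR_ge0.
  - apply: (measurable_fun_fubini_tonelli_G _ mprod) => p.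
    by rewrite lee_fin; apply: prodr_ge0 => i _; exact: expR_ge0.
  - by apply: measurable_funeM; exact: measurable_integral_gauss_bump.
  move=> c _; rewrite (integral_prod_indep (g := fun=> gauss_bump beta c)) //.
  - apply: prode_le_pow_mul => [i|i _]; last exact: integral_uniform_gauss_bump_le.
    by apply: integral_ge0 => w _; rewrite lee_fin expR_ge0.
  - by move=> i; exact: (measurable_gauss_bump beta (f := cst c) (g := id)).
  - by move=> i x; exact: gauss_bump_ge0_le1.
rewrite ge0_integralZl //.
- by rewrite integral_integral_gauss_bump EFinM.
- exact: measurable_integral_gauss_bump.
- by move=> c _; apply: integral_ge0 => w _; rewrite lee_fin expR_ge0.
- by rewrite lee_fin exprn_ge0 // mulr_ge0 ?invr_ge0 ?subr_ge0 ?sqrtr_ge0 // ltW.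
Qed.

Lemma integral_expR_sum_sqr_mul_le k (z : 'I_k -> {RV P >-> R}) (a b : R) :
  (a < b)%R -> (0 < k)%N -> mutually_independent z ->
  (forall i, uniformly_distributed a b (z i)) ->
  (Num.sqrt (pi / (beta * k%:R)))%:E *
    \int[P]_w (expR (- beta * \sum_(i < k) (z i w - zmean z w) ^+ 2))%:E
  <= ((((b - a)^-1 * Num.sqrt (pi / beta)) ^+ k.-1) * Num.sqrt (pi / beta))%:E.
Proof.
move=> ab k0 zi zab.
pose F w c := (\prod_(i < k) gauss_bump beta c (z i w))%:E.
rewrite -ge0_integralZl //; last first.
  apply/measurable_EFinP; apply: measurableT_comp => //.
  by apply: measurable_funM => //; exact: measurable_sum_sqr_sub_zmean.
rewrite (eq_integral (fun w => \int[lebesgue_measure]_c F w c)); last first.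
  by move=> w _; rewrite integralT_prod_gauss_bump // -EFinM mulrC.
rewrite (fubini_tonelli_lebesgue (F := F)); last 2 first.
- apply/measurable_EFinP; apply: measurable_prod => i _.
  exact: measurable_gauss_bump_comp.
- by move=> w c; rewrite lee_fin; apply: prodr_ge0 => i _; exact: expR_ge0.
exact: integral_integral_prod_gauss_bump_le.
Qed.

Lemma integral_expR_sum_sqr_le k (z : 'I_k -> {RV P >-> R}) (a b : R) :
  (a < b)%R -> (0 < k)%N -> mutually_independent z ->
  (forall i, uniformly_distributed a b (z i)) ->
  \int[P]_w (expR (- beta * \sum_(i < k) (z i w - zmean z w) ^+ 2))%:E
  <= (Num.sqrt k%:R * ((b - a)^-1 * Num.sqrt (pi / beta)) ^+ k.-1)%:E.
Proof.
move=> ab k0 zi zab; have := integral_expR_sum_sqr_mul_le ab k0 zi zab.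
have Efin : \int[P]_w (expR (- beta * \sum_(i < k) (z i w - zmean z w) ^+ 2))%:E
    \is a fin_num.
  apply: integral01_fin_num => [|w].
    apply: measurableT_comp => //.
    by apply: measurable_funM => //; exact: measurable_sum_sqr_sub_zmean.
  rewrite expR_ge0 -expR0 ler_expR mulNr oppr_le0 mulr_ge0 ?(ltW beta_gt0) //.
  by apply: sumr_ge0 => i _; exact: sqr_ge0.
rewrite -(fineK Efin); set E := fine _; set s := Num.sqrt (pi / beta).
have s0 : (0 < s)%R by rewrite sqrtr_gt0 divr_gt0 // pi_gt0.
have sk0 : (0 < Num.sqrt k%:R :> R)%R by rewrite sqrtr_gt0 ltr0n.
have -> : Num.sqrt (pi / (beta * k%:R)) = (s / Num.sqrt k%:R)%R.
  rewrite /s -sqrtrV ?ler0n // -sqrtrM ?divr_ge0 ?pi_ge0 ?ltW //.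
  by congr Num.sqrt; field; rewrite pnatr_eq0 -lt0n k0 gt_eqF.
rewrite -EFinM !lee_fin => le_sE; rewrite -(ler_pM2l (divr_gt0 s0 sk0)).
by apply: (le_trans le_sE); rewrite mulrA divfK ?gt_eqF // mulrC.
Qed.

End uniform_gauss_bump.

Lemma powR_half_pred (R : realType) (x : R) k : 0 <= x -> (0 < k)%N ->
  x `^ ((k%:R - 1) / 2) = Num.sqrt x ^+ k.-1.
Proof.
move=> x0 k0; have -> : (k%:R - 1) / 2 = 2^-1 * k.-1%:R :> R.
  by rewrite -{1}(prednK k0) -natr1; ring.
by rewrite powRrM powR12_sqrt // powR_mulrn // sqrtr_ge0.
Qed.

Theorem lemma5 (R : realType) (d : measure_display) (T : measurableType d)
    (P : probability T R) (alpha beta : R) (k : nat)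
    (z : 'I_k -> {RV P >-> R}) :
  0 < alpha -> alpha < 2^-1 -> (1 <= k)%N -> 0 < beta ->
  mutually_independent z ->
  (forall i, uniformly_distributed (alpha - 2^-1) (2^-1 - alpha) (z i)) ->
  ('E_P[fun w => expR (- beta * \sum_(i < k) (z i w - zmean z w) ^+ 2)]
    <= ((k%:R `^ 2^-1) *
        ((pi / ((1 - 2 * alpha) ^+ 2 * beta)) `^ ((k%:R - 1) / 2)))%:E)%E.
Proof.
move=> alpha0 alpha_lt_half k0 beta0 zi zunif.
have ab : alpha - 2^-1 < 2^-1 - alpha by lra.
have width : 2^-1 - alpha - (alpha - 2^-1) = 1 - 2 * alpha by lra.
have width0 : 0 < 1 - 2 * alpha by lra.
have ratio0 : 0 <= pi / ((1 - 2 * alpha) ^+ 2 * beta).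
  by rewrite divr_ge0 ?pi_ge0 // mulr_ge0 ?sqr_ge0 // ltW.
have sqrt_ratio : Num.sqrt (pi / ((1 - 2 * alpha) ^+ 2 * beta)) =
                  (1 - 2 * alpha)^-1 * Num.sqrt (pi / beta).
  rewrite invfM mulrCA sqrtrM ?invr_ge0 ?sqr_ge0 // sqrtrV ?sqr_ge0 //.
  by rewrite sqrtr_sqr gtr0_norm // mulrC.
rewrite powR12_sqrt ?ler0n // powR_half_pred // sqrt_ratio -width unlock.
exact: integral_expR_sum_sqr_le.
Qed.
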